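(* Let ${\bm k}$ be a field of characteristic different from $2$, let $n\ge 1$, and let $\hat{A}_{n,{\bm k}}$ be the completed $n$-th Weyl algebra over ${\bm k}$. For $i=1,\dots,n$ let $$X_i = x_i + \sum_{l = 1}^n x_l\sum_{N = 1}^\infty \sum_{j = 1}^n p^{N-1,l}_{ij}(\partial^1,\ldots,\partial^n)\,\partial^j \in \hat{A}_{n,{\bm k}},$$ where, for each $N\ge 1$ and $i,j,l\in\{1,\dots,n\}$, $p^{N-1,l}_{ij}(\partial^1,\ldots,\partial^n)$ is an arbitrary homogeneous polynomial of degree $N-1$ in $\partial^1,\ldots,\partial^n$ with coefficients in ${\bm k}$, antisymmetric in the lower indices: $p^{N-1,l}_{ij}=-p^{N-1,l}_{ji}$. Then for every integer $k\ge 1$ and every function $\alpha:\{1,\ldots,k\}\to\{1,\ldots,n\}$, writing $\alpha_i=\alpha(i)$, $$\sum_{\sigma\in\Sigma(k)} X_{\alpha_{\sigma(1)}}\cdots X_{\alpha_{\sigma(k)}} \triangleright 1 = k!\,x_{\alpha_1}\cdots x_{\alpha_k},$$ where $\Sigma(k)$ is the symmetric group on $k$ letters.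
   Context: The $n$-th Weyl algebra $A_{n,{\bm k}}$ is the associative ${\bm k}$-algebra generated by $x_1,\ldots,x_n,\partial^1,\ldots,\partial^n$ subject to the relations $[x_i,x_j]=0$, $[\partial^i,\partial^j]=0$, $[\partial^j,x_i]=\delta^j_i$ (equivalently $x_i\partial^j-\partial^j x_i=-\delta_i^j$) for all $i,j$. Its completion $\hat{A}_{n,{\bm k}}$ with respect to the filtration by the degree of differential operators consists of arbitrary formal power series in $\partial^1,\ldots,\partial^n$ with coefficients (written on the left) in the commutative polynomial ring ${\bm k}[x_1,\ldots,x_n]$. The Fock action $\triangleright$ of $\hat{A}_{n,{\bm k}}$ on ${\bm k}[x_1,\ldots,x_n]$ is the one in which $x_i$ acts by multiplication by $x_i$ and $\partial^j$ acts as the partial derivative $\partial/\partial x_j$ (on a given polynomial only finitely many terms of a power series act nontrivially); $1\in{\bm k}[x_1,\ldots,x_n]$ is the vacuum. *)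

From HB Require Import structures.
From mathcomp Require Import all_boot all_algebra all_fingroup.
From mathcomp Require Export mpoly.
Set Implicit Arguments. Unset Strict Implicit. Unset Printing Implicit Defensive.
Import GRing.Theory.
Local Open Scope ring_scope.

(* Fock representation of the (completed) Weyl algebra on F[x_1..x_n]:
   x_i acts as multiplication by 'X_i, d^j acts as the partial derivative
   mderiv j.  A polynomial q(d^1,...,d^n) in the derivations (represented by
   an mpoly q in n variables) acts by  sum_m q_m * d^m. *)
Section Fock.
Context (F : fieldType) (n : nat).

Definition dact (q f : {mpoly F[n]}) : {mpoly F[n]} :=
  \sum_(m <- msupp q) q@_m *: mderivm m f.

(* Fock action of
     X_i = x_i + sum_l x_l sum_{N>=1} sum_j p^{N-1,l}_{ij}(d) d^j,
   where p N l i j stands for p^{N,l}_{ij} (homogeneous of degree N, so the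
   paper's index N-1 is our N, ranging over N >= 0).  On f only the terms
   with N < msize f (= total degree of f + 1) can act nontrivially (the
   operator p N l i j (d) d^j has order N+1), so the formal series over N
   acts on f by this finite sum. *)
Definition Xop (p : nat -> 'I_n -> 'I_n -> 'I_n -> {mpoly F[n]})
    (i : 'I_n) (f : {mpoly F[n]}) : {mpoly F[n]} :=
  'X_i * f + \sum_(l < n) 'X_l *
     \sum_(N < msize f) \sum_(j < n) dact (p N l i j) (mderiv j f).

Definition word_act (p : nat -> 'I_n -> 'I_n -> 'I_n -> {mpoly F[n]})
    (w : seq 'I_n) (f : {mpoly F[n]}) : {mpoly F[n]} :=
  foldr (Xop p) f w.

End Fock.

(* Grouping the permutations s by a = s 0 and using that each X_i acts linearly
   (the terms of order above deg f, dropped by [Xop], vanish on f anyway because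
   p is homogeneous), induction on k reduces the claim to
     \sum_a X_(alpha a) x^(alpha - a) = k x^alpha,
   where x^(alpha - a) is the monomial with the factor x_(alpha a) removed.  The
   part x_(alpha a) of X_(alpha a) contributes k x^alpha.  In the correction, a
   derivative d^j survives only by removing some factor x_(alpha c), c <> a, so it
   contributes \sum_(a <> c) p_(alpha a, alpha c)(d) x^(alpha - a - c), which
   vanishes since p is antisymmetric in its lower indices and 2 is invertible. *)

From HB Require Import structures.
From mathcomp Require Import all_boot all_algebra all_fingroup.
From mathcomp Require Import mpoly.
Set Implicit Arguments.
Unset Strict Implicit.
Unset Printing Implicit Defensive.
Import GRing.Theory.
Local Open Scope ring_scope.

Lemma sum_antisym_eq0 (R : fieldType) (V : lmodType R) (I : finType)
    (H : I -> I -> V) :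
  (2%:R : R) != 0 -> (forall a c, H a c = - H c a) ->
  \sum_a \sum_c H a c = 0.
Proof.
move=> two H_antisym; set S := \sum_a _.
have S_opp : S = - S.
  rewrite {1}/S exchange_big -sumrN; apply: eq_bigr => a _.
  by rewrite -sumrN; apply: eq_bigr => c _; apply: H_antisym.
have : (2%:R : R) *: S = 0 by rewrite scaler_nat mulr2n {1}S_opp addNr.
by move/eqP; rewrite scaler_eq0 (negPf two) => /eqP.
Qed.

Section BigLift.
Context (R : Type) (idx : R) (op : Monoid.com_law idx).

Lemma big_lift_setC1 k (a : 'I_k) (G : 'I_k -> R) :
  \big[op/idx]_(i < k.-1) G (lift a i) = \big[op/idx]_(b in [set~ a]) G b.
Proof.
rewrite (eq_bigl (fun b => b != a)) => [|b]; last by rewrite !inE.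
rewrite (reindex_omap (lift a) (unlift a)) /=.
  by apply: eq_bigl => i; rewrite liftK eqxx eq_sym neq_lift.
by move=> b; case: unliftP => [i ->|->] //; rewrite eqxx.
Qed.

Lemma big_perm_lift k (i j : 'I_k.+1) (G : 'S_k.+1 -> R) :
  \big[op/idx]_(s : 'S_k.+1 | s i == j) G s
    = \big[op/idx]_(t : 'S_k) G (lift_perm i j t).
Proof.
pose unlift_s i' (s : 'S_k.+1) k' := odflt k' (unlift (s i') (s (lift i' k'))).
have unlift_sK i' (s : 'S_k.+1) k' : lift (s i') (unlift_s i' s k') = s (lift i' k').
  rewrite /unlift_s; have := neq_lift i' k'.
  by rewrite -(can_eq (permK s)) => /unlift_some[] ? ? ->.
have unlift_s_inj s : injective (unlift_s i s).
  apply: can_inj (unlift_s (s i) s^-1%g) _ => k'.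
  by rewrite {1}/unlift_s unlift_sK !permK liftK.
rewrite (reindex (lift_perm i j)); last first.
  exists (fun s => perm (unlift_s_inj s)) => [t _ | s /eqP si].
    by apply/permP => k'; rewrite permE /unlift_s lift_perm_lift lift_perm_id liftK.
  apply/permP => k'; case: (unliftP i k') => [k''|] ->; rewrite ?lift_perm_id //.
  by rewrite lift_perm_lift -si permE unlift_sK.
by apply: eq_bigl => t; rewrite lift_perm_id eqxx.
Qed.

End BigLift.

Section Derivatives.
Context (R : comNzRingType) (n : nat).
Local Notation P := {mpoly R[n]}.

Lemma mderivXE (i j : 'I_n) : mderiv j ('X_i : P) = (i == j)%:R.
Proof.
rewrite mderivX mnm1E; case: eqP => [->|_]; last by rewrite scale0r.
have -> : (U_(j) - U_(j) = 0)%MM by apply/mnmP => k; rewrite mnmBE subnn mnm0E.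
by rewrite mpolyX0 scale1r.
Qed.

Lemma mderiv_prod (I : finType) (A : {set I}) (f : I -> P) j :
  mderiv j (\prod_(b in A) f b) =
    \sum_(c in A) mderiv j (f c) * \prod_(b in A :\ c) f b.
Proof.
elim: {A}_.+1 {-2}A (ltnSn #|A|) => // m IH A ltA.
have [->|[x xA]] := set_0Vmem A; first by rewrite !big_set0 -mpolyC1 mderivC.
rewrite (big_setD1 x xA) /= mderivM IH; last first.
  by move: ltA; rewrite (cardsD1 x A) xA add1n ltnS.
rewrite [RHS](big_setD1 x xA) /=; congr (_ + _).
rewrite mulr_sumr; apply: eq_bigr => c; rewrite !inE => /andP[cx cA].
rewrite [X in _ = _ * X](big_setD1 x); last by rewrite !inE eq_sym cx xA.
by rewrite [A :\ c :\ x]setDDl setUC -setDDl mulrCA.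
Qed.

Lemma mderivm_eq0 (m : 'X_{1..n}) (f : P) :
  (msize f <= mdeg m)%N -> mderivm m f = 0.
Proof.
move=> le_fm; apply/mpolyP => m'; rewrite mcoeff_mderivm mcoeff0.
rewrite memN_msupp_eq0 ?mul0rn //; apply: msize_mdeg_ge.
by rewrite mdegD (leq_trans le_fm) ?leq_addr.
Qed.

End Derivatives.

Section FockAction.
Context (F : fieldType) (n : nat).
Local Notation P := {mpoly F[n]}.

Lemma dact_is_linear (q : P) : linear (dact q).
Proof.
move=> c f g; rewrite /dact scaler_sumr -big_split; apply: eq_bigr => m _ /=.
by rewrite linearP scalerDr !scalerA mulrC.
Qed.

HB.instance Definition _ q :=
  GRing.isLinear.Build F P P _ (dact q) (dact_is_linear q).

Lemma dactNl (q f : P) : dact (- q) f = - dact q f.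
Proof.
rewrite /dact (perm_big _ (msuppN q)) -sumrN; apply: eq_bigr => m _.
by rewrite mcoeffN scaleNr.
Qed.

Lemma dact_mderiv (q f : P) j : dact q (mderiv j f) = mderiv j (dact q f).
Proof.
rewrite /dact linear_sum; apply: eq_bigr => m _ /=.
by rewrite mderivZ -!mderivmU1m -!mderivmDm addmC.
Qed.

Lemma dact_homog_eq0 N (q f : P) :
  q \is N.-homog -> (msize f <= N)%N -> dact q f = 0.
Proof.
move=> /dhomogP q_homog le_fN; rewrite /dact big1_seq // => m /andP[_ m_q].
by rewrite mderivm_eq0 ?scaler0 // q_homog.
Qed.

Lemma sum_dact_mderiv_prodX_antisym k (alpha : 'I_k -> 'I_n)
    (q : 'I_n -> 'I_n -> P) :
  (2%:R : F) != 0 -> (forall i j, q i j = - q j i) ->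
  \sum_(a : 'I_k) \sum_(j < n)
     dact (q (alpha a) j) (mderiv j (\prod_(b in [set~ a]) 'X_(alpha b))) = 0.
Proof.
move=> two q_antisym.
pose H a c := if c == a then 0
  else dact (q (alpha a) (alpha c)) (\prod_(b in [set~ a] :\ c) 'X_(alpha b)).
rewrite -[RHS](sum_antisym_eq0 (H := H) two); last first.
  move=> a c; rewrite /H eq_sym; case: eqP => [_|_]; first by rewrite oppr0.
  have -> : [set~ c] :\ a = [set~ a] :\ c by apply/setP => b; rewrite !inE andbC.
  by rewrite q_antisym dactNl.
apply: eq_bigr => a _.
under [LHS]eq_bigr do rewrite mderiv_prod linear_sum.
rewrite exchange_big [RHS](bigD1 a) //= /H eqxx add0r.
apply: eq_big => [c|c]; first by rewrite !inE.
rewrite !inE => ca; rewrite (negPf ca) (bigD1 (alpha c)) //=.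
rewrite [X in _ + X]big1 => [|j /negPf ne]; last first.
  by rewrite mderivXE eq_sym ne mul0r linear0.
by rewrite mderivXE eqxx mul1r addr0.
Qed.

End FockAction.

Section SymmetrizedAction.
Context (F : fieldType) (n : nat)
  (p : nat -> 'I_n -> 'I_n -> 'I_n -> {mpoly F[n]}).
Local Notation P := {mpoly F[n]}.
Hypothesis p_homog : forall N l i j, p N l i j \is N.-homog.

(* [Xop p i f] with the series cut at a fixed order [B] rather than at [msize f],
   which makes linearity in [f] evident. *)
Definition Xop_trunc (B : nat) (i : 'I_n) (f : P) : P :=
  'X_i * f + \sum_(l < n) 'X_l *
     \sum_(N < B) \sum_(j < n) dact (p N l i j) (mderiv j f).

Lemma Xop_trunc_is_linear B i : linear (Xop_trunc B i).
Proof.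
move=> c f g; rewrite /Xop_trunc mulrDr scalerDr scalerAr addrACA; congr (_ + _).
rewrite scaler_sumr -big_split; apply: eq_bigr => l _ /=.
rewrite scalerAr -mulrDr; congr (_ * _).
rewrite scaler_sumr -big_split; apply: eq_bigr => N _ /=.
rewrite scaler_sumr -big_split; apply: eq_bigr => j _ /=.
by rewrite !linearP.
Qed.

HB.instance Definition _ B i :=
  GRing.isLinear.Build F P P _ (Xop_trunc B i) (Xop_trunc_is_linear B i).

Lemma XopE B i f : (msize f <= B)%N -> Xop p i f = Xop_trunc B i f.
Proof.
move=> le_fB; rewrite /Xop /Xop_trunc; congr (_ + _); apply: eq_bigr => l _.
pose G N := \sum_(j < n) dact (p N l i j) (mderiv j f).
congr (_ * _); rewrite (big_ord_widen B G le_fB).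
rewrite [RHS](bigID (fun N : 'I_B => N < msize f)%N) /= [X in _ = _ + X]big1 ?addr0 //.
move=> N; rewrite -leqNgt => le_fN; apply: big1 => j _.
by rewrite dact_mderiv (dact_homog_eq0 (p_homog _ _ _ _) le_fN) linear0.
Qed.

Lemma Xop_is_linear i : linear (Xop p i).
Proof.
move=> c f g; pose B := (msize f + msize g)%N.
have le_cfg : (msize (c *: f + g) <= B)%N.
  rewrite (leq_trans (msizeD_le _ _)) // geq_max leq_addl.
  by rewrite (leq_trans (msizeZ_le _ _)) ?leq_addr.
by rewrite !(XopE (B := B)) ?leq_addl ?leq_addr // linearP.
Qed.

HB.instance Definition _ i :=
  GRing.isLinear.Build F P P _ (Xop p i) (Xop_is_linear i).

Definition symmetrized_act k (alpha : 'I_k -> 'I_n) : P :=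
  \sum_(s : 'S_k) word_act p [seq alpha (s x) | x <- enum 'I_k] 1.

Lemma word_act_lift_perm k (alpha : 'I_k.+1 -> 'I_n) a (t : 'S_k) f :
  word_act p [seq alpha (lift_perm ord0 a t x) | x <- enum 'I_k.+1] f =
  Xop p (alpha a) (word_act p [seq alpha (lift a (t x)) | x <- enum 'I_k] f).
Proof.
rewrite enum_ordSl /word_act /= lift_perm_id -map_comp.
by congr (Xop _ _ (foldr _ _ _)); apply: eq_map => x /=; rewrite lift_perm_lift.
Qed.

Lemma symmetrized_actS k (alpha : 'I_k.+1 -> 'I_n) :
  symmetrized_act alpha =
    \sum_(a : 'I_k.+1)
       Xop p (alpha a) (symmetrized_act (fun b => alpha (lift a b))).
Proof.
rewrite /symmetrized_act (partition_big (fun s : 'S_k.+1 => s ord0) predT) //=.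
apply: eq_bigr => a _; rewrite big_perm_lift linear_sum.
by apply: eq_bigr => t _; rewrite word_act_lift_perm.
Qed.

Hypothesis p_antisym : forall N l i j, p N l i j = - p N l j i.
Hypothesis two_neq0 : (2%:R : F) != 0.

Lemma sum_Xop_monomial k (alpha : 'I_k -> 'I_n) :
  \sum_(a : 'I_k) Xop p (alpha a) (\prod_(b < k.-1) 'X_(alpha (lift a b)))
    = k%:R *: \prod_(b < k) 'X_(alpha b).
Proof.
under eq_bigr => a _ do rewrite (big_lift_setC1 _ a (fun b => 'X_(alpha b))).
pose B := (\sum_a msize (\prod_(b in [set~ a]) ('X_(alpha b) : P)))%N.
have msize_le_B a : (msize (\prod_(b in [set~ a]) ('X_(alpha b) : P)) <= B)%N.
  by rewrite /B [X in (_ <= X)%N](bigD1 a) //= leq_addr.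
under eq_bigr => a _ do rewrite (XopE _ (msize_le_B a)).
rewrite /Xop_trunc big_split /= [X in _ + X]exchange_big /=.
rewrite [X in _ + X]big1 => [|l _]; last first.
  rewrite -mulr_sumr exchange_big /= big1 ?mulr0 // => N _.
  exact: sum_dact_mderiv_prodX_antisym.
rewrite addr0 scaler_nat -[k in _ *+ k]card_ord -sumr_const; apply: eq_bigr => a _.
by rewrite [RHS](bigD1 a) //=; congr (_ * _); apply: eq_bigl => b; rewrite !inE.
Qed.

Lemma symmetrized_actE k (alpha : 'I_k -> 'I_n) :
  symmetrized_act alpha = k`!%:R *: \prod_(b < k) 'X_(alpha b).
Proof.
elim: k alpha => [|k IHk] alpha.
  rewrite /symmetrized_act.
  have -> : enum 'I_0 = [::] by apply/size0nil; rewrite size_enum_ord.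
  by rewrite sumr_const card_Sn big_ord0 /= scale1r.
rewrite symmetrized_actS; under eq_bigr do rewrite IHk linearZ.
by rewrite -scaler_sumr sum_Xop_monomial scalerA -natrM mulnC -factS.
Qed.

End SymmetrizedAction.

Theorem theorem2p1 (F : fieldType) (n : nat)
    (p : nat -> 'I_n -> 'I_n -> 'I_n -> {mpoly F[n]}) :
  2%N \notin [pchar F] ->
  (0 < n)%N ->
  (forall N l i j, p N l i j \is N.-homog) ->
  (forall N l i j, p N l i j = - p N l j i) ->
  forall (k : nat) (alpha : 'I_k -> 'I_n), (0 < k)%N ->
    \sum_(s : 'S_k) word_act p [seq alpha (s i) | i <- enum 'I_k] 1
      = k`!%:R * \prod_(i < k) 'X_(alpha i).
Proof.
move=> two_notin_pchar _ p_homog p_antisym k alpha _.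
have two_neq0 : (2%:R : F) != 0 by move: two_notin_pchar; rewrite inE.
rewrite mulr_natl -scaler_nat.
exact: symmetrized_actE p_homog p_antisym two_neq0 k alpha.
Qed.
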